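(* The inverse hull $IH(C)$ of a Garside monoid $C$ is a bisimple $F$-inverse monoid.
   Context: A Garside monoid is a cancellative monoid $C$ whose only unit is the identity, such that any two elements have a least common left multiple, a least common right multiple, a greatest common left divisor and a greatest common right divisor (i.e. $C$ is a lattice under both left and right divisibility), and which satisfies the standard finiteness conditions (every element has a bound on the lengths of its factorizations into non-identity elements, and there is a Garside element whose left and right divisors coincide, are finite in number and generate $C$). For a right cancellative monoid $C$ and $a\in C$, $\rho_a:C\to C$, $x\mapsto xa$, is a partial bijection of $C$; $IH(C)$ is the inverse submonoid of the symmetric inverse monoid on $C$ generated by all $\rho_a$. An inverse monoid is bisimple if all its elements are $\mathscr{D}$-related, and $F$-inverse if every element lies beneath a unique maximal element in the natural partial order ($a\le b$ iff $a=eb$ for an idempotent $e$). *)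

From Stdlib Require Import List.
Import ListNotations.

Section Monoid.
Context {C : Type} (mul : C -> C -> C) (one : C).

Definition is_monoid : Prop :=
  (forall x y z, mul x (mul y z) = mul (mul x y) z) /\
  (forall x, mul one x = x) /\ (forall x, mul x one = x).

Definition cancellative : Prop :=
  (forall a x y, mul a x = mul a y -> x = y) /\
  (forall a x y, mul x a = mul y a -> x = y).

Definition trivial_units : Prop :=
  forall x y, mul x y = one -> mul y x = one -> x = one.

Definition ldiv (a b : C) : Prop := exists c, mul a c = b.
Definition rdiv (a b : C) : Prop := exists c, mul c a = b.

Definition is_lcrm (a b m : C) : Prop :=
  ldiv a m /\ ldiv b m /\ forall n, ldiv a n -> ldiv b n -> ldiv m n.
Definition is_gcld (a b d : C) : Prop :=
  ldiv d a /\ ldiv d b /\ forall e, ldiv e a -> ldiv e b -> ldiv e d.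
Definition is_lclm (a b m : C) : Prop :=
  rdiv a m /\ rdiv b m /\ forall n, rdiv a n -> rdiv b n -> rdiv m n.
Definition is_gcrd (a b d : C) : Prop :=
  rdiv d a /\ rdiv d b /\ forall e, rdiv e a -> rdiv e b -> rdiv e d.

Definition lattice_conditions : Prop :=
  forall a b, (exists m, is_lclm a b m) /\ (exists m, is_lcrm a b m) /\
              (exists d, is_gcld a b d) /\ (exists d, is_gcrd a b d).

Definition prod_list (l : list C) : C := fold_right mul one l.

Definition bounded_factorizations : Prop :=
  forall x, exists N, forall l : list C,
    (forall y, In y l -> y <> one) -> prod_list l = x -> length l <= N.

Definition is_garside_element (D : C) : Prop :=
  (forall a, ldiv a D <-> rdiv a D) /\
  (exists l : list C, forall a, ldiv a D -> In a l) /\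
  (forall x, exists l : list C, (forall y, In y l -> ldiv y D) /\ prod_list l = x).

Definition garside_monoid : Prop :=
  is_monoid /\ cancellative /\ trivial_units /\ lattice_conditions /\
  bounded_factorizations /\ exists D, is_garside_element D.

(* Partial bijections of C are represented as (functional, injective)
   relations; x rho_a y  iff  y = x a. *)
Definition rho (a : C) : C -> C -> Prop := fun x y => y = mul x a.

End Monoid.

Definition rid {C : Type} : C -> C -> Prop := fun x y => x = y.
Definition rcomp {C : Type} (f g : C -> C -> Prop) : C -> C -> Prop :=
  fun x y => exists z, f x z /\ g z y.
Definition rinv {C : Type} (f : C -> C -> Prop) : C -> C -> Prop :=
  fun x y => f y x.

(* IH(C): the inverse submonoid of the symmetric inverse monoid on C
   generated by all rho_a. *)
Inductive in_IH {C : Type} (mul : C -> C -> C) : (C -> C -> Prop) -> Prop :=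
| IH_id : in_IH mul rid
| IH_rho a : in_IH mul (rho mul a)
| IH_comp f g : in_IH mul f -> in_IH mul g -> in_IH mul (rcomp f g)
| IH_inv f : in_IH mul f -> in_IH mul (rinv f).

Section InverseMonoid.
Context {T : Type} (S : T -> Prop) (op : T -> T -> T).

Definition inverse_monoid : Prop :=
  forall a, S a -> exists! b, S b /\ op (op a b) a = a /\ op (op b a) b = b.

Definition green_L (a b : T) : Prop :=
  exists s t, S s /\ S t /\ a = op s b /\ b = op t a.
Definition green_R (a b : T) : Prop :=
  exists s t, S s /\ S t /\ a = op b s /\ b = op a t.
Definition green_D (a b : T) : Prop :=
  exists c, S c /\ green_L a c /\ green_R c b.

Definition bisimple : Prop := forall a b, S a -> S b -> green_D a b.

Definition idempotent (e : T) : Prop := S e /\ op e e = e.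
Definition nat_le (a b : T) : Prop := exists e, idempotent e /\ a = op e b.
Definition maximal (m : T) : Prop := S m /\ forall n, S n -> nat_le m n -> n = m.

Definition F_inverse : Prop :=
  forall a, S a -> exists! m, maximal m /\ nat_le a m.
End InverseMonoid.

(* Every element of IH(C) is a partial bijection of C, and, since any two
   elements have a least common left multiple, every element is of the form
   rho_a^-1 rho_b = {(z a, z b) | z in C}.  Partial bijections form an inverse
   monoid under composition.  For bisimplicity, rho_a^-1 rho_b is L-related to
   rho_c^-1 rho_b and R-related to rho_c^-1 rho_d.  Finally rho_{zc}^-1 rho_{zd}
   lies below rho_c^-1 rho_d, and dividing a and b by their greatest common
   left divisor gives the unique maximal element above rho_a^-1 rho_b. *)

From Stdlib Require Import FunctionalExtensionality PropExtensionality.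

Section PartialBijections.
Context {T : Type}.
Implicit Types f g e m : T -> T -> Prop.

Lemma rel_ext f g : (forall x y, f x y <-> g x y) -> f = g.
Proof.
  intro H. apply functional_extensionality; intro x.
  apply functional_extensionality; intro y. apply propositional_extensionality, H.
Qed.

Definition partial_bijection f : Prop :=
  (forall x y y', f x y -> f x y' -> y = y') /\
  (forall x x' y, f x y -> f x' y -> x = x').

Lemma partial_bijection_rinv f : partial_bijection f -> partial_bijection (rinv f).
Proof. intros [F1 F2]. split; unfold rinv; eauto. Qed.

Lemma partial_bijection_rcomp f g :
  partial_bijection f -> partial_bijection g -> partial_bijection (rcomp f g).
Proof.
  intros [F1 F2] [G1 G2]. split.
  - intros x y y' [z [H1 H2]] [z' [H3 H4]].
    assert (z = z') by eauto. subst. eauto.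
  - intros x x' y [z [H1 H2]] [z' [H3 H4]].
    assert (z = z') by eauto. subst. eauto.
Qed.

Lemma rcomp_rinv_pb f : partial_bijection f -> rcomp (rcomp f (rinv f)) f = f.
Proof.
  intros [F1 F2]. apply rel_ext; intros x y; unfold rcomp, rinv; split.
  - intros [z [[w [H1 H2]] H3]]. assert (x = z) by eauto. subst; auto.
  - intros H. exists x; split; [exists y|]; auto.
Qed.

(* f ⊆ rinv g is read off f g f = f; then g f g = g gives the converse inclusion. *)
Lemma pb_relative_inverse_unique f g :
  partial_bijection f -> partial_bijection g ->
  rcomp (rcomp f g) f = f -> rcomp (rcomp g f) g = g -> g = rinv f.
Proof.
  intros [F1 F2] [G1 G2] Hfgf Hgfg.
  assert (K : forall p q, f p q -> g q p).
  { intros p q Hpq. rewrite <- Hfgf in Hpq.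
    destruct Hpq as [q' [[p' [Hf Hg]] Hf2]].
    assert (p' = q).
    { apply (F1 p); auto. rewrite <- Hfgf. exists q'; split; [exists p'|]; auto. }
    subst p'. assert (q' = p) by eauto. subst q'. auto. }
  apply rel_ext; intros x y; unfold rinv; split.
  - intros Hg. rewrite <- Hgfg in Hg. destruct Hg as [q' [[p [Hxp Hpq]] Hq'y]].
    assert (q' = x) by eauto using K. subst q'.
    rewrite <- Hfgf in Hpq. destruct Hpq as [r [[p' [Hpp' Hp'r]] Hrq]].
    assert (p' = x) by eauto. subst p'. assert (r = y) by eauto. subst r. auto.
  - apply K.
Qed.

Lemma pb_idempotent_diag e :
  partial_bijection e -> rcomp e e = e -> forall x y, e x y -> x = y.
Proof.
  intros [E1 E2] He x y Hxy.
  pose proof Hxy as H. rewrite <- He in H. destruct H as [z [H1 H2]].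
  assert (z = y) by eauto. subst z. eauto.
Qed.

Variable S : (T -> T -> Prop) -> Prop.
Hypothesis S_pb : forall f, S f -> partial_bijection f.
Hypothesis S_rinv : forall f, S f -> S (rinv f).

Lemma inverse_monoid_pb : inverse_monoid S (@rcomp T).
Proof.
  intros f Sf. pose proof (S_pb f Sf) as Pf.
  exists (rinv f). split.
  - split; [auto|]. split; [apply rcomp_rinv_pb; auto|].
    apply (rcomp_rinv_pb (rinv f)), partial_bijection_rinv; auto.
  - intros g [Sg [Hfgf Hgfg]]. symmetry. apply pb_relative_inverse_unique; auto.
Qed.

Lemma nat_le_sub f m : nat_le S (@rcomp T) f m -> forall x y, f x y -> m x y.
Proof.
  intros [e [[Se He] ->]] x y [z [H1 H2]].
  assert (x = z) by (apply (pb_idempotent_diag e); auto). subst; auto.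
Qed.

End PartialBijections.

Section InverseHull.
Variables (C : Type) (mul : C -> C -> C) (one : C).
Hypothesis mulmA : forall x y z, mul x (mul y z) = mul (mul x y) z.
Hypothesis mul1m : forall x, mul one x = x.
Hypothesis mulm1 : forall x, mul x one = x.
Hypothesis mulmI : forall a x y, mul a x = mul a y -> x = y.
Hypothesis mulIm : forall a x y, mul x a = mul y a -> x = y.

Local Notation IH := (in_IH mul).

Definition rho_quot (a b : C) : C -> C -> Prop :=
  fun x y => exists z, x = mul z a /\ y = mul z b.

Lemma rho_quotE a b : rcomp (rinv (rho mul a)) (rho mul b) = rho_quot a b.
Proof.
  apply rel_ext; intros x y; unfold rcomp, rinv, rho, rho_quot; split;
    intros [z [H1 H2]]; eauto.
Qed.

Lemma in_IH_rho_quot a b : IH (rho_quot a b).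
Proof. rewrite <- rho_quotE. apply IH_comp; [apply IH_inv|]; apply IH_rho. Qed.

Lemma in_IH_pb f : IH f -> partial_bijection f.
Proof.
  induction 1.
  - split; unfold rid; intros; subst; reflexivity.
  - split; unfold rho; intros; subst; eauto.
  - apply partial_bijection_rcomp; auto.
  - apply partial_bijection_rinv; auto.
Qed.

Lemma rho_quot_trans a b c : rcomp (rho_quot a b) (rho_quot b c) = rho_quot a c.
Proof.
  apply rel_ext; intros x y; unfold rcomp, rho_quot; split.
  - intros [w [[z [H1 H2]] [z' [H3 H4]]]]. subst.
    apply mulIm in H3. subst. eauto.
  - intros [z [H1 H2]]. exists (mul z b). split; eauto.
Qed.

Lemma rho_quot_rcomp_lclm a b c d m u v :
  is_lclm mul b c m -> mul u b = m -> mul v c = m ->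
  rcomp (rho_quot a b) (rho_quot c d) = rho_quot (mul u a) (mul v d).
Proof.
  intros [_ [_ Hm]] Hu Hv.
  apply rel_ext; intros x y; unfold rcomp, rho_quot; split.
  - intros [w [[z [H1 H2]] [z' [H3 H4]]]]. subst x y w.
    destruct (Hm (mul z b)) as [k Hk]; [exists z; auto | exists z'; auto |].
    rewrite <- Hu, mulmA in Hk. apply mulIm in Hk.
    rewrite <- Hk, <- mulmA, Hu, <- Hv, mulmA in H3. apply mulIm in H3. subst z z'.
    exists k. rewrite !mulmA. auto.
  - intros [k [H1 H2]]. subst x y. exists (mul k m). split.
    + exists (mul k u). rewrite <- Hu, !mulmA. auto.
    + exists (mul k v). rewrite <- Hv, !mulmA. auto.
Qed.

Hypothesis lclm_exists : forall a b, exists m, is_lclm mul a b m.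

Lemma in_IH_rho_quotP f : IH f -> exists a b, f = rho_quot a b.
Proof.
  induction 1 as [| a | f g _ [a [b ->]] _ [c [d ->]] | f _ [a [b ->]]].
  - exists one, one. apply rel_ext; intros x y; unfold rid, rho_quot; split.
    + intros ->. exists y. rewrite mulm1. auto.
    + intros [z [-> ->]]. reflexivity.
  - exists one, a. apply rel_ext; intros x y; unfold rho, rho_quot; split.
    + intros ->. exists x. rewrite mulm1. auto.
    + intros [z [-> ->]]. rewrite mulm1. reflexivity.
  - destruct (lclm_exists b c) as [m Hm].
    pose proof Hm as [[u Hu] [[v Hv] _]].
    exists (mul u a), (mul v d). apply rho_quot_rcomp_lclm with m; auto.
  - exists b, a. apply rel_ext; intros x y; unfold rinv, rho_quot; split;
      intros [z [H1 H2]]; eauto.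
Qed.

Lemma IH_bisimple : bisimple IH (@rcomp C).
Proof.
  intros f g Hf Hg.
  destruct (in_IH_rho_quotP f Hf) as [a [b ->]].
  destruct (in_IH_rho_quotP g Hg) as [c [d ->]].
  exists (rho_quot c b). split; [apply in_IH_rho_quot | split].
  - exists (rho_quot a c), (rho_quot c a).
    repeat split; try apply in_IH_rho_quot; rewrite rho_quot_trans; auto.
  - exists (rho_quot d b), (rho_quot b d).
    repeat split; try apply in_IH_rho_quot; rewrite rho_quot_trans; auto.
Qed.

Lemma rho_quot_le z c d :
  nat_le IH (@rcomp C) (rho_quot (mul z c) (mul z d)) (rho_quot c d).
Proof.
  exists (rho_quot (mul z c) (mul z c)). split.
  - split; [apply in_IH_rho_quot | apply rho_quot_trans].
  - apply rel_ext; intros x y; unfold rcomp, rho_quot; split.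
    + intros [k [-> ->]]. exists (mul k (mul z c)). split.
      * exists k; auto.
      * exists (mul k z). rewrite !mulmA; auto.
    + intros [w [[k [-> ->]] [k' [H3 ->]]]].
      rewrite mulmA in H3. apply mulIm in H3. subst. exists k. rewrite mulmA; auto.
Qed.

Lemma rho_quot_sub a b c d :
  (forall x y, rho_quot a b x y -> rho_quot c d x y) ->
  exists z, a = mul z c /\ b = mul z d.
Proof. intros H. apply H. exists one. rewrite !mul1m; auto. Qed.

Hypothesis units_trivial : trivial_units mul one.

Lemma gcld_cofactors_coprime a b g c d :
  is_gcld mul a b g -> mul g c = a -> mul g d = b ->
  forall z, ldiv mul z c -> ldiv mul z d -> z = one.
Proof.
  intros [_ [_ Hg]] Hc Hd z [c1 Hc1] [d1 Hd1].
  destruct (Hg (mul g z)) as [k Hk].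
  - exists c1. rewrite <- mulmA, Hc1; auto.
  - exists d1. rewrite <- mulmA, Hd1; auto.
  - assert (Hzk : mul z k = one) by (apply (mulmI g); rewrite mulm1, mulmA; auto).
    apply (units_trivial z k); auto.
    apply (mulmI z). rewrite mulmA, Hzk, mulm1, mul1m; auto.
Qed.

Lemma rho_quot_maximal c d :
  (forall z, ldiv mul z c -> ldiv mul z d -> z = one) ->
  maximal IH (@rcomp C) (rho_quot c d).
Proof.
  intros Hcop. split; [apply in_IH_rho_quot|].
  intros n Hn Hle.
  destruct (in_IH_rho_quotP n Hn) as [p [q ->]].
  destruct (rho_quot_sub c d p q (nat_le_sub _ in_IH_pb _ _ Hle)) as [z [Ec Ed]].
  assert (z = one) by (apply Hcop; [exists p | exists q]; auto).
  subst z. rewrite mul1m in Ec, Ed. subst; auto.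
Qed.

Hypothesis gcld_exists : forall a b, exists g, is_gcld mul a b g.

Lemma IH_F_inverse : F_inverse IH (@rcomp C).
Proof.
  intros f Hf.
  destruct (in_IH_rho_quotP f Hf) as [a [b ->]].
  destruct (gcld_exists a b) as [g Hg].
  pose proof Hg as [[c Hc] [[d Hd] Hgmax]].
  exists (rho_quot c d). split; [split|].
  - apply rho_quot_maximal, (gcld_cofactors_coprime a b g); auto.
  - subst a b. apply rho_quot_le.
  - intros m [[Hm Hmmax] Hle].
    destruct (in_IH_rho_quotP m Hm) as [c' [d' ->]].
    destruct (rho_quot_sub a b c' d' (nat_le_sub _ in_IH_pb _ _ Hle)) as [z [Ea Eb]].
    destruct (Hgmax z) as [w Hw]; [exists c'; auto | exists d'; auto |].
    subst a b. rewrite <- Hw, <- mulmA in Ea, Eb.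
    apply mulmI in Ea. apply mulmI in Eb. subst c' d'.
    apply Hmmax; [apply in_IH_rho_quot | apply rho_quot_le].
Qed.

End InverseHull.

Theorem corollary4p4 (C : Type) (mul : C -> C -> C) (one : C)
  (HC : garside_monoid mul one) :
  inverse_monoid (in_IH mul) (@rcomp C) /\
  bisimple (in_IH mul) (@rcomp C) /\
  F_inverse (in_IH mul) (@rcomp C).
Proof.
  destruct HC as [[mulmA [mul1m mulm1]] [[mulmI mulIm] [units_trivial [lat _]]]].
  assert (lclm_exists : forall a b, exists m, is_lclm mul a b m) by apply lat.
  assert (gcld_exists : forall a b, exists g, is_gcld mul a b g) by apply lat.
  split; [|split].
  - apply inverse_monoid_pb; [apply in_IH_pb; auto | apply IH_inv].
  - apply IH_bisimple with one; auto.
  - apply IH_F_inverse with one; auto.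
Qed.
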